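(* Let $\{g_n\}_{n=1}^\infty$ be a nested sequence of geodesics in the unit disk $\mathbb{D}$ such that any two adjacent geodesics $g_n,g_{n+1}$ share an ideal endpoint and no three of the geodesics share an ideal endpoint. Fix $P_1\in g_1$ and let $h$ be the piecewise horocyclic path starting at $P_1$ that is the concatenation of horocyclic arcs $h_n$, where $h_n$ lies in the wedge $W_n$ between $g_n$ and $g_{n+1}$, is orthogonal to both, lies on a horocycle centered at the common endpoint of $g_n$ and $g_{n+1}$, and starts at the endpoint of $h_{n-1}$ on $g_n$ (with $h_1$ starting at $P_1$). Then the sequence $\{g_n\}$ accumulates to a single point of $S^1$ if and only if $h$ has infinite hyperbolic length.
   Context: Nested means that for each $n\ge2$ the geodesics $g_{n-1}$ and $g_{n+1}$ lie in different components of $\mathbb{D}\setminus g_n$. The wedge $W_n$ is the region between $g_n$ and $g_{n+1}$; its vertex is their common ideal endpoint. A nested sequence either accumulates to a single point of $S^1$ or to a geodesic in $\mathbb{D}$. *)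

From Stdlib Require Import Reals.
From Coquelicot Require Import Coquelicot.
Open Scope R_scope.

Definition in_disk (z : C) : Prop := Cmod z < 1.
Definition on_circle (z : C) : Prop := Cmod z = 1.

(* For ideal points a <> b on S^1, the geodesic with endpoints a, b is the
   intersection of D with the generalized circle
     { z | alpha (1 + |z|^2) - 2 Re (z * conj w) = 0 },
   alpha = - Im (a * conj b),  w = i (a - b).
   (This is the circle through a, b orthogonal to S^1, or the diameter through
   a, b when a = -b; (alpha, w) <> 0 whenever a <> b.) *)
Definition geo_alpha (a b : C) : R := - Im (Cmult a (Cconj b)).
Definition geo_w (a b : C) : C := Cmult (0%R, 1%R) (Cminus a b).
Definition geoF (a b z : C) : R :=
  geo_alpha a b * (1 + (Cmod z) ^ 2) - 2 * Re (Cmult z (Cconj (geo_w a b))).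

Definition geod (a b : C) (z : C) : Prop := in_disk z /\ geoF a b z = 0.

Definition side_pos (a b : C) (z : C) : Prop := in_disk z /\ geoF a b z > 0.
Definition side_neg (a b : C) (z : C) : Prop := in_disk z /\ geoF a b z < 0.

Definition is_endpoint (a b p : C) : Prop := p = a \/ p = b.

(* Horocycle centered at the ideal point v through P in D: the Euclidean circle
   tangent to S^1 at v through P, with center (1 - rho) v and radius rho. *)
Definition horo_radius (v P : C) : R :=
  (Cmod (Cminus P v)) ^ 2 / (2 * (1 - Re (Cmult P (Cconj v)))).
Definition horo_param (v : C) (rho : R) (t : R) : C :=
  Cplus (Cmult (RtoC (1 - rho)) v) (Cmult (RtoC rho) (Cmult v (cos t, sin t))).
(* t = 0 corresponds to the center v itself; t in (0, 2 pi) parametrizes the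
   horocycle inside D. *)

Definition hyp_length (gamma : R -> C) (s t : R) : R :=
  RInt (fun u =>
          2 * sqrt ((Derive (fun r => fst (gamma r)) u) ^ 2
                    + (Derive (fun r => snd (gamma r)) u) ^ 2)
            / (1 - (Cmod (gamma u)) ^ 2)) s t.

(* L is the hyperbolic length of the horocyclic arc, on the horocycle centered
   at v through P, going from P to Q without passing through v. *)
Definition horo_arc_length (v P Q : C) (L : R) : Prop :=
  let rho := horo_radius v P in
  exists t1 t2 : R,
    0 < t1 < 2 * PI /\ 0 < t2 < 2 * PI /\
    P = horo_param v rho t1 /\ Q = horo_param v rho t2 /\
    L = Rabs (hyp_length (horo_param v rho) t1 t2).

Definition on_horocycle (v P Q : C) : Prop :=
  in_disk Q /\
  Cmod (Cminus Q (Cmult (RtoC (1 - horo_radius v P)) v)) = horo_radius v P.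

(* The sequence of geodesics n |-> g(a n, b n) converges to the single point
   zeta of S^1: the geodesics converge to zeta (uniformly, i.e. in the
   Hausdorff sense). *)
Definition converges_to_ideal_point (a b : nat -> C) : Prop :=
  exists zeta : C, on_circle zeta /\
    forall eps : R, eps > 0 -> exists N : nat, forall n : nat, (N <= n)%nat ->
      forall z : C, geod (a n) (b n) z -> Cmod (Cminus z zeta) < eps.

From Stdlib Require Import Reals Lra Lia Psatz Classical.
From Coquelicot Require Import Coquelicot.
Open Scope R_scope.

(* Write the geodesics as g(w n, w (n + 1)) for points w n of S^1, the vertex of the n-th
   wedge being w (n + 1).  Along a horocyclic arc of length L from P to Q,
   1 - |P|^2 <= (1 + L)^2 (1 - |Q|^2); so if h has finite length its points stay away from S^1
   and the geodesics cannot shrink to a point of S^1.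
   Conversely, in the chart sending w 0 to infinity, nesting makes the coordinates y k of
   w (k + 1) interlaced: y (k + 2) lies strictly between y k and y (k + 1).  If the gaps
   |y (k + 1) - y k| tend to 0, the y k converge and the geodesics shrink to the limit point.
   Otherwise the chords |w n - w (n + 1)| are bounded below while the chords |w n - w (n + 2)|
   are summable.  Consecutive horocycles are tangent, which in the upper half-plane coordinates
   centred at their vertices reads t n t (n + 1) |w (n + 1) - w (n + 2)|^2 = 4 for their heights
   t n; hence the heights stay bounded below, and the n-th arc, of length
   2 |w n - w (n + 2)| / (t n |w n - w (n + 1)| |w (n + 1) - w (n + 2)|), contributes a summable
   amount. *)

Definition norm2 (z : C) : R := fst z ^ 2 + snd z ^ 2.
Definition dist2 (z w : C) : R := (fst z - fst w) ^ 2 + (snd z - snd w) ^ 2.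

Definition geo_form (a b z : C) : R :=
  (fst a * snd b - snd a * fst b) * (1 + norm2 z)
  - 2 * (snd z * (fst a - fst b) - fst z * (snd a - snd b)).

Lemma norm2_ge0 z : 0 <= norm2 z.
Proof. unfold norm2; pose proof (pow2_ge_0 (fst z)); pose proof (pow2_ge_0 (snd z)); lra. Qed.

Lemma dist2_ge0 z w : 0 <= dist2 z w.
Proof.
  unfold dist2; pose proof (pow2_ge_0 (fst z - fst w)); pose proof (pow2_ge_0 (snd z - snd w)); lra.
Qed.

Lemma dist2_sym z w : dist2 z w = dist2 w z.
Proof. unfold dist2; ring. Qed.

Lemma dist2_pos z w : z <> w -> 0 < dist2 z w.
Proof.
  intro Hzw; destruct (Rle_lt_or_eq_dec _ _ (dist2_ge0 z w)) as [|H]; auto.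
  exfalso; apply Hzw; destruct z as [z1 z2], w as [w1 w2]; unfold dist2 in H; simpl in H.
  pose proof (pow2_ge_0 (z1 - w1)); pose proof (pow2_ge_0 (z2 - w2)).
  f_equal; nra.
Qed.

Lemma Cmod_sqr z : Cmod z ^ 2 = norm2 z.
Proof. unfold Cmod; rewrite pow2_sqrt; [reflexivity | apply norm2_ge0]. Qed.

Lemma Cmod_minus_dist2 z w : Cmod (Cminus z w) = sqrt (dist2 z w).
Proof. destruct z, w; unfold Cmod, dist2; simpl; f_equal; ring. Qed.

Lemma on_circle_norm2 a : on_circle a -> norm2 a = 1.
Proof. unfold on_circle; intro H; rewrite <- Cmod_sqr, H; ring. Qed.

Lemma in_disk_norm2 z : in_disk z <-> norm2 z < 1.
Proof.
  unfold in_disk; rewrite <- Cmod_sqr; pose proof (Cmod_ge_0 z); split; intro; nra.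
Qed.

Lemma geoF_geo_form a b z : geoF a b z = geo_form a b z.
Proof.
  unfold geoF, geo_alpha, geo_w; rewrite Cmod_sqr; destruct a, b, z.
  unfold geo_form, norm2; simpl; ring.
Qed.

Lemma geo_form_swap a b z : geo_form b a z = - geo_form a b z.
Proof. unfold geo_form; ring. Qed.

Lemma geod_geo_form a b z : geod a b z <-> norm2 z < 1 /\ geo_form a b z = 0.
Proof. unfold geod; rewrite in_disk_norm2, geoF_geo_form; tauto. Qed.

Lemma geod_norm2 a b z : geod a b z -> norm2 z < 1.
Proof. rewrite geod_geo_form; tauto. Qed.

Lemma geod_swap a b z : geod a b z -> geod b a z.
Proof. rewrite !geod_geo_form, geo_form_swap; intros [? ?]; split; lra. Qed.

Lemma dist2_disk_circle_pos z v : norm2 v = 1 -> norm2 z < 1 -> 0 < dist2 z v.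
Proof. intros Hv Hz; apply dist2_pos; intros ->; lra. Qed.

Lemma dist2_circle_le4 p q : norm2 p = 1 -> norm2 q = 1 -> dist2 p q <= 4.
Proof.
  unfold norm2, dist2; intros.
  pose proof (pow2_ge_0 (fst p + fst q)); pose proof (pow2_ge_0 (snd p + snd q)); nra.
Qed.

Lemma sqrt_dist2_triangle z u w : sqrt (dist2 z w) <= sqrt (dist2 z u) + sqrt (dist2 u w).
Proof.
  rewrite <- !Cmod_minus_dist2.
  replace (Cminus z w) with (Cplus (Cminus z u) (Cminus u w)) by
    (destruct z, u, w; unfold Cminus, Cplus, Copp; simpl; f_equal; ring).
  apply Cmod_triangle.
Qed.

Lemma dist2_le_twice_sum z u w : dist2 z w <= 2 * (dist2 z u + dist2 u w).
Proof.
  unfold dist2; pose proof (pow2_ge_0 (fst z + fst w - 2 * fst u));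
    pose proof (pow2_ge_0 (snd z + snd w - 2 * snd u)); nra.
Qed.

Lemma sqrt_lt_of_lt_sqr x e : 0 <= x -> 0 < e -> x < e ^ 2 -> sqrt x < e.
Proof. intros Hx He H; rewrite <- (sqrt_pow2 e) by lra; apply sqrt_lt_1_alt; lra. Qed.

(** * Horocyclic arcs *)

Definition cross (z v : C) : R := snd z * fst v - fst z * snd v.

Lemma horo_param_fst v r t :
  fst (horo_param v r t) = (1 - r) * fst v + r * (fst v * cos t - snd v * sin t).
Proof. destruct v; simpl; ring. Qed.

Lemma horo_param_snd v r t :
  snd (horo_param v r t) = (1 - r) * snd v + r * (fst v * sin t + snd v * cos t).
Proof. destruct v; simpl; ring. Qed.

Lemma horo_param_norm2 v r t : norm2 v = 1 ->
  1 - norm2 (horo_param v r t) = 2 * r * (1 - r) * (1 - cos t).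
Proof.
  unfold norm2; intro Hv; rewrite horo_param_fst, horo_param_snd.
  pose proof (sin2_cos2 t) as Ht; unfold Rsqr in Ht.
  transitivity (1 - (fst v ^ 2 + snd v ^ 2) *
                ((1 - r) ^ 2 + r ^ 2 * (sin t * sin t + cos t * cos t) + 2 * r * (1 - r) * cos t));
    [ring | rewrite Hv, Ht; ring].
Qed.

Lemma horo_param_dist2 v r t : norm2 v = 1 ->
  dist2 (horo_param v r t) v = 2 * r ^ 2 * (1 - cos t).
Proof.
  unfold norm2, dist2; intro Hv; rewrite horo_param_fst, horo_param_snd.
  pose proof (sin2_cos2 t) as Ht; unfold Rsqr in Ht.
  transitivity ((fst v ^ 2 + snd v ^ 2) *
                (r ^ 2 * (sin t * sin t + cos t * cos t + 1) - 2 * r ^ 2 * cos t));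
    [ring | rewrite Hv, Ht; ring].
Qed.

Lemma horo_param_cross v r t : norm2 v = 1 -> cross (horo_param v r t) v = r * sin t.
Proof.
  unfold norm2, cross; intro Hv; rewrite horo_param_fst, horo_param_snd.
  transitivity ((fst v ^ 2 + snd v ^ 2) * (r * sin t)); [ring | rewrite Hv; ring].
Qed.

Lemma one_minus_cos_pos t : 0 < t < 2 * PI -> 0 < 1 - cos t.
Proof.
  intro Ht; replace t with (2 * (t / 2)) by field; rewrite cos_2a_sin.
  assert (0 < sin (t / 2)) by (apply sin_gt_0; lra); nra.
Qed.

Lemma horo_radius_bounds v P : norm2 v = 1 -> norm2 P < 1 -> 0 < horo_radius v P < 1.
Proof.
  intros Hv HP; pose proof (dist2_disk_circle_pos P v Hv HP) as Hd.
  unfold horo_radius; rewrite Cmod_minus_dist2, pow2_sqrt by apply dist2_ge0.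
  replace (2 * (1 - Re (Cmult P (Cconj v)))) with (dist2 P v + (1 - norm2 P))
    by (destruct P, v; unfold dist2, norm2 in *; simpl in *; lra).
  split; [apply Rdiv_lt_0_compat | apply Rlt_div_l]; lra.
Qed.

Lemma Derive_horo_param_fst v r u :
  Derive (fun s => fst (horo_param v r s)) u = r * (- fst v * sin u - snd v * cos u).
Proof.
  apply is_derive_unique.
  apply (is_derive_ext (fun s => (1 - r) * fst v + r * (fst v * cos s - snd v * sin s))).
  { intro; symmetry; apply horo_param_fst. }
  auto_derive; auto; ring.
Qed.

Lemma Derive_horo_param_snd v r u :
  Derive (fun s => snd (horo_param v r s)) u = r * (fst v * cos u - snd v * sin u).
Proof.
  apply is_derive_unique.
  apply (is_derive_ext (fun s => (1 - r) * snd v + r * (fst v * sin s + snd v * cos s))).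
  { intro; symmetry; apply horo_param_snd. }
  auto_derive; auto; ring.
Qed.

Lemma horo_param_speed v r u : norm2 v = 1 -> 0 < r < 1 -> 0 < u < 2 * PI ->
  2 * sqrt ((Derive (fun s => fst (horo_param v r s)) u) ^ 2
            + (Derive (fun s => snd (horo_param v r s)) u) ^ 2)
    / (1 - Cmod (horo_param v r u) ^ 2)
  = 1 / ((1 - r) * (1 - cos u)).
Proof.
  intros Hv Hr Hu; pose proof (one_minus_cos_pos u Hu).
  rewrite Derive_horo_param_fst, Derive_horo_param_snd, Cmod_sqr, horo_param_norm2 by exact Hv.
  replace ((r * (- fst v * sin u - snd v * cos u)) ^ 2 + (r * (fst v * cos u - snd v * sin u)) ^ 2)
    with (r ^ 2 * ((fst v ^ 2 + snd v ^ 2) * (sin u * sin u + cos u * cos u))) by ring.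
  pose proof (sin2_cos2 u) as S; unfold norm2, Rsqr in *; rewrite Hv, S, Rmult_1_l, Rmult_1_r.
  rewrite sqrt_pow2 by lra; field; lra.
Qed.

Definition horo_primitive (r t : R) : R := - sin t / ((1 - r) * (1 - cos t)).

Lemma is_derive_horo_primitive r u : 0 < r < 1 -> 0 < 1 - cos u ->
  is_derive (horo_primitive r) u (1 / ((1 - r) * (1 - cos u))).
Proof.
  intros Hr Hu; unfold horo_primitive; auto_derive.
  - apply Rmult_integral_contrapositive; split; lra.
  - pose proof (sin2_cos2 u) as S; unfold Rsqr in S.
    transitivity ((cos u * cos u + sin u * sin u - cos u) / ((1 - r) * (1 - cos u) * (1 - cos u)));
      [field | replace (cos u * cos u + sin u * sin u) with 1 by lra; field]; lra.
Qed.

Lemma hyp_length_horo_param v r t1 t2 : norm2 v = 1 -> 0 < r < 1 ->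
  0 < t1 < 2 * PI -> 0 < t2 < 2 * PI ->
  hyp_length (horo_param v r) t1 t2 = horo_primitive r t2 - horo_primitive r t1.
Proof.
  intros Hv Hr H1 H2.
  assert (Hin : forall u, Rmin t1 t2 <= u <= Rmax t1 t2 -> 0 < u < 2 * PI).
  { intros u Hu; pose proof (Rmin_glb_lt t1 t2 0); pose proof (Rmax_lub_lt t1 t2 (2 * PI)); lra. }
  unfold hyp_length; rewrite (RInt_ext _ (fun u => 1 / ((1 - r) * (1 - cos u)))).
  2: { intros u Hu; apply horo_param_speed; auto; apply Hin; lra. }
  apply is_RInt_unique, (is_RInt_derive (horo_primitive r)).
  - intros u Hu; apply is_derive_horo_primitive, one_minus_cos_pos, Hin; auto.
  - intros u Hu; pose proof (one_minus_cos_pos u (Hin u Hu)).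
    apply (ex_derive_continuous (K := R_AbsRing) (V := R_NormedModule)); auto_derive.
    apply Rmult_integral_contrapositive; split; lra.
Qed.

(* [z |-> i (v + z) / (v - z)] maps D onto the upper half-plane and v to infinity; the image
   of z has imaginary part [horo_height v z] and real part [- horo_abscissa v z], so the
   horocycles at v become horizontal lines. *)
Definition horo_height (v z : C) : R := (1 - norm2 z) / dist2 z v.
Definition horo_abscissa (v z : C) : R := 2 * cross z v / dist2 z v.

Lemma horo_coords_dist2 v z : norm2 v = 1 -> norm2 z < 1 ->
  (horo_abscissa v z ^ 2 + (horo_height v z + 1) ^ 2) * dist2 z v = 4.
Proof.
  intros Hv Hz; pose proof (dist2_disk_circle_pos z v Hv Hz).
  assert (Lagrange : cross z v ^ 2 + (fst z * fst v + snd z * snd v) ^ 2 = norm2 z).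
  { transitivity (norm2 z * norm2 v); [unfold cross, norm2; ring | rewrite Hv; ring]. }
  assert (Hd : dist2 z v = norm2 z + 1 - 2 * (fst z * fst v + snd z * snd v)).
  { rewrite <- Hv; unfold dist2, norm2; ring. }
  unfold horo_abscissa, horo_height; field_simplify; [| lra].
  apply Rmult_eq_reg_r with (dist2 z v); [| lra].
  unfold Rdiv; rewrite Rmult_assoc, Rinv_l, Rmult_1_r by lra.
  rewrite Hd in *; nra.
Qed.

Lemma horo_param_coords v r t : norm2 v = 1 -> 0 < r < 1 -> 0 < 1 - cos t ->
  horo_height v (horo_param v r t) = (1 - r) / r /\
  horo_primitive r t * ((1 - r) / r) = - horo_abscissa v (horo_param v r t).
Proof.
  intros Hv Hr Ht; unfold horo_height, horo_abscissa, horo_primitive.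
  rewrite horo_param_norm2, horo_param_dist2, horo_param_cross by exact Hv.
  split; field; lra.
Qed.

Lemma horo_arc_coords v P Q L : norm2 v = 1 -> norm2 P < 1 -> horo_arc_length v P Q L ->
  norm2 Q < 1 /\ horo_height v Q = horo_height v P /\
  L * horo_height v P = Rabs (horo_abscissa v Q - horo_abscissa v P).
Proof.
  intros Hv HP (t1 & t2 & Ht1 & Ht2 & EP & EQ & EL).
  pose proof (horo_radius_bounds v P Hv HP) as Hr; set (r := horo_radius v P) in *.
  rewrite EL, EP, EQ; clear EL EP EQ.
  pose proof (one_minus_cos_pos _ Ht1) as C1; pose proof (one_minus_cos_pos _ Ht2) as C2.
  destruct (horo_param_coords v r t1 Hv Hr C1) as [T1 X1].
  destruct (horo_param_coords v r t2 Hv Hr C2) as [T2 X2].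
  assert (0 < (1 - r) / r) by (apply Rdiv_lt_0_compat; lra).
  split; [| split; [congruence |]].
  - pose proof (horo_param_norm2 v r t2 Hv).
    assert (0 < 2 * r * (1 - r) * (1 - cos t2)) by (apply Rmult_lt_0_compat; [nra | lra]); lra.
  - rewrite hyp_length_horo_param, T1 by auto.
    rewrite <- (Rabs_pos_eq ((1 - r) / r)) at 1 by lra.
    rewrite <- Rabs_mult, Rmult_minus_distr_r, X1, X2, <- Rabs_Ropp; f_equal; ring.
Qed.

Lemma sq_shift_bound x1 x2 c L : 0 <= L -> Rabs (x2 - x1) <= L * c ->
  x2 ^ 2 + c ^ 2 <= (1 + L) ^ 2 * (x1 ^ 2 + c ^ 2).
Proof.
  intros HL H; apply Rabs_le_between in H.
  assert (Hamgm : 2 * Rabs x1 * Rabs c <= x1 ^ 2 + c ^ 2).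
  { rewrite <- (pow2_abs x1), <- (pow2_abs c); pose proof (pow2_ge_0 (Rabs x1 - Rabs c)); nra. }
  assert (Hc : L * c <= L * Rabs c) by (apply Rmult_le_compat_l; [lra | apply Rle_abs]).
  pose proof (Rle_abs x1); pose proof (Rle_abs (- x1)); rewrite Rabs_Ropp in *.
  pose proof (Rabs_pos c); pose proof (Rabs_pos x1).
  assert (x2 ^ 2 <= (Rabs x1 + L * Rabs c) ^ 2) by nra.
  nra.
Qed.

Lemma horo_arc_length_disk_bound v P Q L : norm2 v = 1 -> norm2 P < 1 ->
  horo_arc_length v P Q L -> 0 <= L /\ 1 - norm2 P <= (1 + L) ^ 2 * (1 - norm2 Q).
Proof.
  intros Hv HP HL; destruct (horo_arc_coords v P Q L Hv HP HL) as (HQ & ET & EL).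
  pose proof (horo_coords_dist2 v P Hv HP) as DP; pose proof (horo_coords_dist2 v Q Hv HQ) as DQ.
  pose proof (dist2_disk_circle_pos P v Hv HP); pose proof (dist2_disk_circle_pos Q v Hv HQ).
  assert (HT : 0 < horo_height v P) by (apply Rdiv_lt_0_compat; lra).
  assert (HL0 : 0 <= L) by (pose proof (Rabs_pos (horo_abscissa v Q - horo_abscissa v P)); nra).
  split; [exact HL0 |].
  rewrite ET in DQ; set (T := horo_height v P) in *.
  set (XP := horo_abscissa v P) in *; set (XQ := horo_abscissa v Q) in *.
  assert (Hb : XQ ^ 2 + (T + 1) ^ 2 <= (1 + L) ^ 2 * (XP ^ 2 + (T + 1) ^ 2)).
  { apply sq_shift_bound; [exact HL0 | rewrite <- EL; nra]. }
  replace (1 - norm2 P) with (T * dist2 P v) by (unfold T, horo_height; field; lra).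
  replace (1 - norm2 Q) with (horo_height v Q * dist2 Q v)
    by (unfold horo_height; field; lra).
  rewrite ET.
  (* On the horocycle of height T, [1 - norm2 z = 4 T / (X ^ 2 + (T + 1) ^ 2)]. *)
  set (A := XP ^ 2 + (T + 1) ^ 2) in *; set (B := XQ ^ 2 + (T + 1) ^ 2) in *.
  assert (0 < A) by (unfold A; pose proof (pow2_ge_0 XP); nra).
  assert (0 < B) by (unfold B; pose proof (pow2_ge_0 XQ); nra).
  replace (dist2 P v) with (4 / A) by (rewrite <- DP; field; lra).
  replace (dist2 Q v) with (4 / B) by (rewrite <- DQ; field; lra).
  apply (Rmult_le_reg_r (A * B)); [nra |].
  replace (T * (4 / A) * (A * B)) with (4 * T * B) by (field; lra).
  replace ((1 + L) ^ 2 * (T * (4 / B)) * (A * B)) with (4 * T * ((1 + L) ^ 2 * A)) by (field; lra).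
  apply Rmult_le_compat_l; lra.
Qed.

(** * Paths of finite length stay away from the circle *)

Lemma sum_n_succ (u : nat -> R) n : sum_n u (S n) = sum_n u n + u (S n).
Proof. rewrite sum_Sn; reflexivity. Qed.

Lemma sum_n_le_compat (u v : nat -> R) : (forall n, u n <= v n) -> forall N, sum_n u N <= sum_n v N.
Proof. intros H N; rewrite !sum_n_Reals; apply sum_growing, H. Qed.

Lemma sum_n_Rmult_l c (u : nat -> R) N : sum_n (fun k => c * u k) N = c * sum_n u N.
Proof. exact (sum_n_mult_l c u N). Qed.

Lemma sum_n_shift (u : nat -> R) N : sum_n u (S N) = u 0%nat + sum_n (fun k => u (S k)) N.
Proof.
  induction N as [| N IH]; [now rewrite sum_n_succ, !sum_O |].
  rewrite sum_n_succ, IH, (sum_n_succ (fun k => u (S k))); lra.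
Qed.

Lemma sum_n_nonneg_succ (u : nat -> R) : (forall n, 0 <= u n) ->
  forall n, sum_n u n <= sum_n u (S n).
Proof. intros Hu n; rewrite sum_n_succ; specialize (Hu (S n)); lra. Qed.

Lemma nondecr_le (u : nat -> R) : (forall n, u n <= u (S n)) ->
  forall n m, (n <= m)%nat -> u n <= u m.
Proof. intros Hu n m Hnm; induction Hnm; [lra | specialize (Hu m); lra]. Qed.

Lemma is_lim_seq_p_infty_unbounded (u : nat -> R) :
  is_lim_seq u p_infty -> ~ (exists B, forall n, u n <= B).
Proof.
  rewrite <- is_lim_seq_spec; simpl; intros Hlim [B HB]; destruct (Hlim B) as [N HN].
  specialize (HN N (Nat.le_refl N)); specialize (HB N); lra.
Qed.

Lemma is_lim_seq_p_infty_nondecr (u : nat -> R) : (forall n, u n <= u (S n)) ->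
  ~ (exists B, forall n, u n <= B) -> is_lim_seq u p_infty.
Proof.
  rewrite <- is_lim_seq_spec; simpl; intros Hu Hunb M; apply NNPP; intro Hev.
  apply Hunb; exists M; intro n; apply Rnot_lt_le; intro Hn; apply Hev; exists n; intros m Hm.
  pose proof (nondecr_le u Hu n m Hm); lra.
Qed.

Lemma exp_le_compat x y : x <= y -> exp x <= exp y.
Proof. intros [H | ->]; [left; apply exp_increasing, H | right; reflexivity]. Qed.

Lemma sqr_one_plus_le_exp x : 0 <= x -> (1 + x) ^ 2 <= exp (2 * x).
Proof.
  intro Hx; pose proof (exp_ineq1_le x).
  replace (2 * x) with (x + x) by ring; rewrite exp_plus; simpl; nra.
Qed.

Lemma step_ratio_exp_bound (c L : nat -> R) :
  (forall n, 0 <= L n) -> (forall n, 0 <= c n) ->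
  (forall n, c n <= (1 + L n) ^ 2 * c (S n)) ->
  forall N, c 0%nat <= c (S N) * exp (2 * sum_n L N).
Proof.
  intros HL Hc Hstep; induction N as [| N IH].
  - rewrite sum_O; pose proof (sqr_one_plus_le_exp _ (HL 0%nat)).
    pose proof (Hstep 0%nat); pose proof (Hc 1%nat); nra.
  - rewrite sum_n_succ, Rmult_plus_distr_l, exp_plus.
    pose proof (sqr_one_plus_le_exp _ (HL (S N))); pose proof (Hstep (S N)).
    pose proof (Hc (S (S N))); pose proof (exp_pos (2 * sum_n L N)).
    assert (c (S N) <= c (S (S N)) * exp (2 * L (S N))) by nra.
    nra.
Qed.

Lemma one_minus_norm2_le_dist z zeta : norm2 zeta = 1 ->
  1 - norm2 z <= 2 * sqrt (dist2 z zeta).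
Proof.
  intro Hzeta; pose proof (sqrt_dist2_triangle zeta z (0, 0)) as T.
  replace (dist2 zeta (0, 0)) with 1 in T by (rewrite <- Hzeta; unfold dist2, norm2; simpl; ring).
  replace (dist2 z (0, 0)) with (norm2 z) in T by (unfold dist2, norm2; simpl; ring).
  rewrite sqrt_1, dist2_sym in T.
  pose proof (sqrt_pos (norm2 z)); pose proof (pow2_sqrt _ (norm2_ge0 z)).
  pose proof (sqrt_pos (dist2 z zeta)); nra.
Qed.

Lemma horo_length_diverges_of_converges (a b v P : nat -> C) (L : nat -> R) :
  (forall n, norm2 (v n) = 1) -> (forall n, geod (a n) (b n) (P n)) ->
  (forall n, horo_arc_length (v n) (P n) (P (S n)) (L n)) ->
  converges_to_ideal_point a b -> is_lim_seq (sum_n L) p_infty.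
Proof.
  intros Hv HPg HL (zeta & Hzeta & Hconv); apply on_circle_norm2 in Hzeta.
  assert (HPd : forall n, norm2 (P n) < 1) by (intro n; apply (geod_norm2 _ _ _ (HPg n))).
  assert (HPd' : forall n, 0 <= 1 - norm2 (P n)) by (intro n; pose proof (HPd n); lra).
  pose proof (fun n => horo_arc_length_disk_bound _ _ _ _ (Hv n) (HPd n) (HL n)) as HA.
  apply is_lim_seq_p_infty_nondecr; [apply sum_n_nonneg_succ; apply HA |].
  intros [B HB].
  pose proof (step_ratio_exp_bound (fun n => 1 - norm2 (P n)) L (fun n => proj1 (HA n))
                HPd' (fun n => proj2 (HA n))) as Hch.
  simpl in Hch; set (c0 := 1 - norm2 (P 0%nat)) in Hch.
  assert (Hc0 : 0 < c0) by (pose proof (HPd 0%nat); unfold c0; lra).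
  set (K := exp (2 * B)); assert (HK : 0 < K) by apply exp_pos.
  destruct (Hconv (c0 / (4 * K))) as [N HN]; [apply Rlt_gt, Rdiv_lt_0_compat; lra |].
  pose proof (HN (S N) (Nat.le_succ_diag_r N) (P (S N)) (HPg (S N))) as Hnear.
  rewrite Cmod_minus_dist2 in Hnear.
  pose proof (one_minus_norm2_le_dist (P (S N)) zeta Hzeta).
  assert (exp (2 * sum_n L N) <= K) by (apply exp_le_compat; specialize (HB N); lra).
  pose proof (Hch N); pose proof (HPd (S N)).
  assert (c0 <= (1 - norm2 (P (S N))) * K) by nra.
  assert ((1 - norm2 (P (S N))) * K < c0 / 2) by
    (apply Rlt_le_trans with (2 * (c0 / (4 * K)) * K); [nra | right; field; lra]).
  lra.
Qed.

(** * Stereographic coordinates *)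

Definition rot (z c : C) : C := Cmult z (Cconj c).

Lemma rot_norm2 z c : norm2 (rot z c) = norm2 z * norm2 c.
Proof. destruct z, c; unfold rot, norm2; simpl; ring. Qed.

Lemma rot_dist2 z w c : dist2 (rot z c) (rot w c) = dist2 z w * norm2 c.
Proof. destruct z, w, c; unfold rot, dist2, norm2; simpl; ring. Qed.

Lemma rot_geo_form a b z c : norm2 c = 1 ->
  geo_form (rot a c) (rot b c) (rot z c) = geo_form a b z.
Proof.
  intro Hc; transitivity (norm2 c * ((fst a * snd b - snd a * fst b) * (1 + norm2 c * norm2 z)
                          - 2 * (snd z * (fst a - fst b) - fst z * (snd a - snd b)))).
  - destruct a, b, z, c; unfold geo_form, rot, norm2; simpl; ring.
  - rewrite Hc; unfold geo_form; ring.
Qed.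

Lemma rot_self c : norm2 c = 1 -> rot c c = RtoC 1.
Proof.
  destruct c; unfold rot, Cmult, Cconj, norm2, RtoC; simpl; intro H.
  f_equal; [rewrite <- H |]; ring.
Qed.

Lemma rot_mult c z : norm2 c = 1 -> rot (Cmult c z) c = z.
Proof.
  destruct c as [c1 c2], z as [z1 z2]; unfold rot, Cmult, Cconj, norm2; simpl; intro H.
  f_equal.
  - transitivity (z1 * (c1 * (c1 * 1) + c2 * (c2 * 1))); [ring | rewrite H; ring].
  - transitivity (z2 * (c1 * (c1 * 1) + c2 * (c2 * 1))); [ring | rewrite H; ring].
Qed.

Lemma norm2_mult z w : norm2 (Cmult z w) = norm2 z * norm2 w.
Proof. destruct z, w; unfold norm2; simpl; ring. Qed.

Lemma dist2_rot_one z c : norm2 c = 1 -> dist2 (rot z c) (RtoC 1) = dist2 z c.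
Proof. intro Hc; rewrite <- (rot_self c Hc), rot_dist2, Hc; ring. Qed.

Lemma rot_neq z w c : norm2 c = 1 -> z <> w -> rot z c <> rot w c.
Proof.
  intros Hc Hzw E; pose proof (dist2_pos z w Hzw).
  assert (Hzero : dist2 (rot z c) (rot w c) = 0) by (rewrite E; unfold dist2; ring).
  rewrite rot_dist2, Hc in Hzero; lra.
Qed.

Definition stereo (p : C) : R := snd p / (1 - fst p).
Definition stereo_inv (x : R) : C := ((x ^ 2 - 1) / (1 + x ^ 2), 2 * x / (1 + x ^ 2)).

Lemma one_plus_sqr_pos x : 0 < 1 + x ^ 2.
Proof. pose proof (pow2_ge_0 x); lra. Qed.

Lemma stereo_inv_norm2 x : norm2 (stereo_inv x) = 1.
Proof. pose proof (one_plus_sqr_pos x); unfold norm2, stereo_inv; simpl; field; lra. Qed.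

Lemma stereo_inv_dist2 x y :
  dist2 (stereo_inv x) (stereo_inv y) = 4 * (x - y) ^ 2 / ((1 + x ^ 2) * (1 + y ^ 2)).
Proof.
  pose proof (one_plus_sqr_pos x); pose proof (one_plus_sqr_pos y).
  unfold dist2, stereo_inv; simpl; field; lra.
Qed.

Lemma stereo_inv_dist2_one x : dist2 (stereo_inv x) (RtoC 1) = 4 / (1 + x ^ 2).
Proof. pose proof (one_plus_sqr_pos x); unfold dist2, stereo_inv, RtoC; simpl; field; lra. Qed.

Lemma stereo_inv_dist2_le x y : dist2 (stereo_inv x) (stereo_inv y) <= 4 * (x - y) ^ 2.
Proof.
  rewrite stereo_inv_dist2; pose proof (pow2_ge_0 x); pose proof (pow2_ge_0 y).
  pose proof (pow2_ge_0 (x - y)); apply Rle_div_l; nra.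
Qed.

Lemma stereo_inv_dist2_ge x y M : Rabs x <= M -> Rabs y <= M ->
  4 * (x - y) ^ 2 / (1 + M ^ 2) ^ 2 <= dist2 (stereo_inv x) (stereo_inv y).
Proof.
  intros Hx Hy; rewrite stereo_inv_dist2.
  assert (x ^ 2 <= M ^ 2) by (rewrite <- (pow2_abs x); pose proof (Rabs_pos x); nra).
  assert (y ^ 2 <= M ^ 2) by (rewrite <- (pow2_abs y); pose proof (Rabs_pos y); nra).
  pose proof (pow2_ge_0 x); pose proof (pow2_ge_0 y); pose proof (pow2_ge_0 (x - y)).
  apply Rmult_le_compat_l; [nra |]; apply Rinv_le_contravar; nra.
Qed.

Lemma stereo_inv_stereo p : norm2 p = 1 -> p <> RtoC 1 -> stereo_inv (stereo p) = p.
Proof.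
  destruct p as [p1 p2]; unfold norm2, stereo, stereo_inv, RtoC; cbn [fst snd]; intros H Hp.
  assert (p1 < 1).
  { apply Rnot_le_lt; intro; apply Hp; assert (p1 = 1) by nra; subst; f_equal; nra. }
  replace ((p2 / (1 - p1)) ^ 2) with ((1 + p1) / (1 - p1)).
  2: { replace ((p2 / (1 - p1)) ^ 2) with (p2 ^ 2 / (1 - p1) ^ 2) by (field; lra).
       replace (p2 ^ 2) with (1 - p1 ^ 2) by lra; field; lra. }
  f_equal; field; lra.
Qed.

Lemma geo_form_stereo_inv3 x y z : geo_form (stereo_inv x) (stereo_inv y) (stereo_inv z) =
  - 8 * (x - y) * (y - z) * (z - x) / ((1 + x ^ 2) * (1 + y ^ 2) * (1 + z ^ 2)).
Proof.
  pose proof (one_plus_sqr_pos x); pose proof (one_plus_sqr_pos y); pose proof (one_plus_sqr_pos z).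
  unfold geo_form, norm2, stereo_inv; simpl; field; lra.
Qed.

Lemma geo_form_stereo_inv_one x y :
  geo_form (stereo_inv x) (stereo_inv y) (RtoC 1) = 8 * (x - y) / ((1 + x ^ 2) * (1 + y ^ 2)).
Proof.
  pose proof (one_plus_sqr_pos x); pose proof (one_plus_sqr_pos y).
  unfold geo_form, norm2, stereo_inv, RtoC; simpl; field; lra.
Qed.

Lemma geo_form_one_stereo_inv x z : geo_form (RtoC 1) (stereo_inv x) z =
  2 / (1 + x ^ 2) * (x * dist2 z (RtoC 1) - 2 * snd z).
Proof.
  pose proof (one_plus_sqr_pos x).
  unfold geo_form, norm2, dist2, stereo_inv, RtoC; simpl; field; lra.
Qed.

Definition coord (c p : C) : R := stereo (rot p c).

Lemma stereo_inv_coord c p : norm2 c = 1 -> norm2 p = 1 -> p <> c ->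
  stereo_inv (coord c p) = rot p c.
Proof.
  intros Hc Hp Hpc; apply stereo_inv_stereo; [rewrite rot_norm2, Hc, Hp; ring |].
  rewrite <- (rot_self c Hc); apply rot_neq; auto.
Qed.

(* A point of the geodesic from 1 to [stereo_inv x] within distance [y] of 1. *)
Definition geod_point (x y : R) : C :=
  let D := y ^ 2 * (1 + x ^ 2) + 4 * y + 4 in
  ((2 * (1 + x ^ 2) + (y ^ 2 - 2) * (x ^ 2 - 1)) / D, 2 * x * y ^ 2 / D).

Lemma geod_point_spec x y : 0 < y ->
  norm2 (geod_point x y) < 1 /\
  geo_form (RtoC 1) (stereo_inv x) (geod_point x y) = 0 /\
  dist2 (geod_point x y) (RtoC 1) <= y ^ 2.
Proof.
  intro Hy; assert (HD : 4 < y ^ 2 * (1 + x ^ 2) + 4 * y + 4)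
    by (pose proof (one_plus_sqr_pos x); nra).
  set (D := y ^ 2 * (1 + x ^ 2) + 4 * y + 4) in HD.
  rewrite geo_form_one_stereo_inv.
  replace (norm2 (geod_point x y)) with (1 - 8 * y / D)
    by (unfold norm2, geod_point; cbn [fst snd]; unfold D in *; field; lra).
  replace (dist2 (geod_point x y) (RtoC 1)) with (4 * y ^ 2 / D)
    by (unfold dist2, geod_point, RtoC; cbn [fst snd]; unfold D in *; field; lra).
  split; [| split].
  - assert (0 < 8 * y / D) by (apply Rdiv_lt_0_compat; lra); lra.
  - pose proof (one_plus_sqr_pos x); unfold geod_point; cbn [fst snd]; unfold D in *.
    field; split; lra.
  - apply Rle_div_l; [lra | pose proof (pow2_ge_0 y); nra].
Qed.

Lemma geo_form_lipschitz_at_one a b : exists K, 0 <= K /\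
  forall z y, 0 <= y -> norm2 z <= 1 -> dist2 z (RtoC 1) <= y ^ 2 ->
  geo_form a b z - geo_form a b (RtoC 1) <= K * y.
Proof.
  set (al := fst a * snd b - snd a * fst b).
  exists (3 * Rabs al + 2 * Rabs (fst a - fst b) + 2 * Rabs (snd a - snd b)).
  split; [pose proof (Rabs_pos al); pose proof (Rabs_pos (fst a - fst b));
          pose proof (Rabs_pos (snd a - snd b)); lra |].
  intros z y Hy Hz Hd; destruct z as [x1 x2]; unfold norm2, dist2, RtoC in *; cbn [fst snd] in *.
  replace (geo_form a b (x1, x2) - geo_form a b (1, 0))
    with (al * ((x1 - 1) * (x1 + 1) + x2 * x2) + 2 * ((fst b - fst a) * x2)
          + 2 * ((snd a - snd b) * (x1 - 1)))
    by (unfold geo_form, al, norm2; cbn [fst snd]; ring).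
  assert (Hprod : forall u w B, Rabs w <= B -> u * w <= Rabs u * B).
  { intros u w B H; eapply Rle_trans; [apply Rle_abs |].
    rewrite Rabs_mult; apply Rmult_le_compat_l; [apply Rabs_pos | exact H]. }
  assert (Hsq : forall e, e ^ 2 <= y ^ 2 -> Rabs e <= y)
    by (intros e He; apply Rabs_le; split; nra).
  pose proof (pow2_ge_0 (x1 - 1)); pose proof (pow2_ge_0 (x2 - 0)).
  assert (h1 : Rabs (x1 - 1) <= y) by (apply Hsq; lra).
  assert (h2 : Rabs x2 <= y) by (apply Hsq; replace (x2 ^ 2) with ((x2 - 0) ^ 2) by ring; lra).
  assert (h3 : Rabs ((x1 - 1) * (x1 + 1) + x2 * x2) <= 3 * y).
  { eapply Rle_trans; [apply Rabs_triang |]; rewrite !Rabs_mult.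
    assert (Rabs (x1 + 1) <= 2) by (apply Rabs_le; split; nra).
    assert (Rabs x2 <= 1) by (apply Rabs_le; split; nra).
    pose proof (Rabs_pos (x1 - 1)); pose proof (Rabs_pos x2); pose proof (Rabs_pos (x1 + 1)); nra. }
  pose proof (Hprod al _ _ h3); pose proof (Hprod (snd a - snd b) _ _ h1).
  pose proof (Hprod (fst b - fst a) _ _ h2) as Hb.
  rewrite <- Rabs_Ropp, Ropp_minus_distr in Hb; lra.
Qed.

(* Continuity of [geo_form a b] at the ideal endpoint c of the geodesic g(c, d). *)
Lemma geo_form_nonneg_at_endpoint a b c d : norm2 c = 1 -> norm2 d = 1 -> c <> d ->
  (forall z, geod c d z -> geo_form a b z > 0) -> geo_form a b c >= 0.
Proof.
  intros Hc Hd Hcd Hpos; set (x := coord c d).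
  assert (Hx : stereo_inv x = rot d c) by (apply stereo_inv_coord; auto).
  assert (Hpt : forall y, 0 < y -> geo_form (rot a c) (rot b c) (geod_point x y) > 0).
  { intros y Hy; destruct (geod_point_spec x y Hy) as (H1 & H2 & _).
    rewrite <- (rot_mult c (geod_point x y) Hc), rot_geo_form by exact Hc.
    apply Hpos, geod_geo_form; rewrite norm2_mult, Hc, Rmult_1_l; split; [exact H1 |].
    rewrite <- (rot_geo_form c d _ c Hc), rot_self, rot_mult, <- Hx; auto. }
  rewrite <- (rot_geo_form a b c c Hc), rot_self by exact Hc.
  set (g := geo_form (rot a c) (rot b c) (RtoC 1)).
  apply Rnot_lt_ge; intro Hg.
  destruct (geo_form_lipschitz_at_one (rot a c) (rot b c)) as (K & HK & Hlip).
  set (y := - g / (K + 1)); assert (Hy : 0 < y) by (apply Rdiv_lt_0_compat; lra).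
  destruct (geod_point_spec x y Hy) as (H1 & _ & H3).
  pose proof (Hlip _ y (Rlt_le _ _ Hy) (Rlt_le _ _ H1) H3) as Hnear; pose proof (Hpt y Hy).
  assert (K * y < - g).
  { apply (Rmult_lt_reg_r (K + 1)); [lra |].
    replace (K * y * (K + 1)) with (K * - g) by (unfold y; field; lra); nra. }
  fold g in Hnear; lra.
Qed.

Lemma geo_form_pos_at_endpoint a b c d p : norm2 c = 1 -> norm2 d = 1 -> c <> d ->
  is_endpoint c d p -> (forall z, geod c d z -> side_pos a b z) -> geo_form a b p >= 0.
Proof.
  intros Hc Hd Hcd Hp Hside.
  assert (Hpos : forall z, geod c d z -> geo_form a b z > 0)
    by (intros z Hz; destruct (Hside z Hz) as [_ H]; rewrite geoF_geo_form in H; exact H).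
  destruct Hp as [-> | ->].
  - apply (geo_form_nonneg_at_endpoint a b c d); auto.
  - apply (geo_form_nonneg_at_endpoint a b d c); auto; intros z Hz; apply Hpos, geod_swap, Hz.
Qed.

Lemma geo_form_neg_at_endpoint a b c d p : norm2 c = 1 -> norm2 d = 1 -> c <> d ->
  is_endpoint c d p -> (forall z, geod c d z -> side_neg a b z) -> geo_form a b p <= 0.
Proof.
  intros Hc Hd Hcd Hp Hside.
  cut (geo_form b a p >= 0); [rewrite geo_form_swap; lra |].
  apply (geo_form_pos_at_endpoint b a c d p); auto.
  intros z Hz; destruct (Hside z Hz) as [Hz' H]; split; [exact Hz' |].
  rewrite geoF_geo_form, geo_form_swap, <- geoF_geo_form; lra.
Qed.

Lemma opposite_sides_endpoints a b c d e f p q :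
  norm2 c = 1 -> norm2 d = 1 -> norm2 e = 1 -> norm2 f = 1 -> c <> d -> e <> f ->
  is_endpoint c d p -> is_endpoint e f q ->
  ((forall z, geod c d z -> side_pos a b z) /\ (forall z, geod e f z -> side_neg a b z)) \/
  ((forall z, geod c d z -> side_neg a b z) /\ (forall z, geod e f z -> side_pos a b z)) ->
  geo_form a b p * geo_form a b q <= 0.
Proof.
  intros Hc Hd He Hf Hcd Hef Hp Hq [[H1 H2] | [H1 H2]].
  - pose proof (geo_form_pos_at_endpoint a b c d p Hc Hd Hcd Hp H1).
    pose proof (geo_form_neg_at_endpoint a b e f q He Hf Hef Hq H2); nra.
  - pose proof (geo_form_neg_at_endpoint a b c d p Hc Hd Hcd Hp H1).
    pose proof (geo_form_pos_at_endpoint a b e f q He Hf Hef Hq H2); nra.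
Qed.

Lemma geod_rot_coord c p z : norm2 c = 1 -> norm2 p = 1 -> p <> c -> geo_form c p z = 0 ->
  coord c p * dist2 (rot z c) (RtoC 1) = 2 * snd (rot z c).
Proof.
  intros Hc Hp Hpc G.
  rewrite <- (rot_geo_form c p z c Hc), rot_self, <- stereo_inv_coord, geo_form_one_stereo_inv in G
    by auto.
  pose proof (one_plus_sqr_pos (coord c p)).
  assert (2 / (1 + coord c p ^ 2) <> 0) by (apply Rgt_not_eq, Rdiv_lt_0_compat; lra).
  apply Rmult_integral in G; destruct G; [contradiction | lra].
Qed.

Lemma horo_abscissa_geod c p z : norm2 c = 1 -> norm2 p = 1 -> p <> c -> norm2 z < 1 ->
  geo_form c p z = 0 -> horo_abscissa c z = coord c p.
Proof.
  intros Hc Hp Hpc Hz G; pose proof (geod_rot_coord c p z Hc Hp Hpc G) as E.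
  pose proof (dist2_disk_circle_pos z c Hc Hz).
  unfold horo_abscissa; rewrite dist2_rot_one in E by exact Hc.
  replace (cross z c) with (snd (rot z c)) by (destruct z, c; unfold cross, rot; simpl; ring).
  rewrite <- E; field; lra.
Qed.

(* The horocycles at c and at p through a point of g(c, p) are tangent there. *)
Lemma horo_height_mul_geod c p z : norm2 c = 1 -> norm2 p = 1 -> p <> c -> norm2 z < 1 ->
  geo_form c p z = 0 -> horo_height c z * horo_height p z * dist2 c p = 4.
Proof.
  intros Hc Hp Hpc Hz G; pose proof (geod_rot_coord c p z Hc Hp Hpc G) as E.
  pose proof (dist2_disk_circle_pos z c Hc Hz); pose proof (dist2_disk_circle_pos z p Hp Hz).
  set (x := coord c p) in E; set (Z := rot z c) in E.
  assert (T : (1 - norm2 Z) ^ 2 * dist2 (RtoC 1) (stereo_inv x)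
              = 4 * dist2 Z (RtoC 1) * dist2 Z (stereo_inv x)).
  { pose proof (one_plus_sqr_pos x) as Hx.
    assert (D : 4 * dist2 Z (RtoC 1) * dist2 Z (stereo_inv x) - (1 - norm2 Z) ^ 2 * dist2 (RtoC
        1) (stereo_inv x)
            = 4 * (x * dist2 Z (RtoC 1) - 2 * snd Z) ^ 2 / (1 + x ^ 2))
      by (destruct Z; unfold dist2, norm2, stereo_inv, RtoC; cbn [fst snd]; field; lra).
    rewrite E, Rminus_diag, pow_i, Rmult_0_r, Rdiv_0_l in D by lia; lra. }
  unfold x, Z in T; rewrite stereo_inv_coord in T by auto.
  rewrite <- (rot_self c Hc) in T at 1; rewrite !rot_dist2, rot_norm2, Hc, !Rmult_1_r in T.
  unfold horo_height; apply (Rmult_eq_reg_r (dist2 z c * dist2 z p)); [| nra].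
  transitivity ((1 - norm2 z) ^ 2 * dist2 c p); [field; lra |].
  rewrite T, dist2_rot_one by exact Hc; ring.
Qed.

Lemma geod_dist2_mul_le c p z : norm2 c = 1 -> norm2 p = 1 -> p <> c -> norm2 z < 1 ->
  geo_form c p z = 0 -> dist2 z c * dist2 z p <= dist2 c p / 4.
Proof.
  intros Hc Hp Hpc Hz G; pose proof (horo_height_mul_geod c p z Hc Hp Hpc Hz G) as T.
  pose proof (dist2_disk_circle_pos z c Hc Hz); pose proof (dist2_disk_circle_pos z p Hp Hz).
  unfold horo_height in T.
  assert (E : (1 - norm2 z) ^ 2 * dist2 c p = 4 * (dist2 z c * dist2 z p))
    by (rewrite <- T; field; lra).
  pose proof (norm2_ge0 z); pose proof (dist2_ge0 c p).
  assert ((1 - norm2 z) ^ 2 <= 1) by nra; nra.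
Qed.

Lemma coord_diff_sqr c p q : norm2 c = 1 -> norm2 p = 1 -> norm2 q = 1 -> p <> c -> q <> c ->
  (coord c p - coord c q) ^ 2 * dist2 p c * dist2 q c = 4 * dist2 p q.
Proof.
  intros Hc Hp Hq Hpc Hqc.
  rewrite <- (dist2_rot_one p c Hc), <- (dist2_rot_one q c Hc).
  replace (dist2 p q) with (dist2 (rot p c) (rot q c)) by (rewrite rot_dist2, Hc; ring).
  rewrite <- !stereo_inv_coord by auto.
  rewrite !stereo_inv_dist2_one, stereo_inv_dist2.
  pose proof (one_plus_sqr_pos (coord c p)); pose proof (one_plus_sqr_pos (coord c q)).
  field; lra.
Qed.

Lemma nonpos_of_scaled c D X : 0 < c -> 0 < D -> c * X / D <= 0 -> X <= 0.
Proof.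
  intros Hc HD H; apply Rmult_le_compat_r with (r := D / c) in H.
  2: apply Rlt_le, Rdiv_lt_0_compat; lra.
  replace (c * X / D * (D / c)) with X in H by (field; lra); lra.
Qed.

Lemma stereo_inv_separated A B p q : A <> B ->
  geo_form (stereo_inv A) (stereo_inv B) (stereo_inv p)
    * geo_form (stereo_inv A) (stereo_inv B) (stereo_inv q) <= 0 ->
  ((p - A) * (p - B)) * ((q - A) * (q - B)) <= 0.
Proof.
  intros HAB H; rewrite !geo_form_stereo_inv3 in H.
  pose proof (one_plus_sqr_pos A); pose proof (one_plus_sqr_pos B);
    pose proof (one_plus_sqr_pos p); pose proof (one_plus_sqr_pos q).
  apply (nonpos_of_scaled (64 * (A - B) ^ 2)
           ((1 + A ^ 2) ^ 2 * (1 + B ^ 2) ^ 2 * (1 + p ^ 2) * (1 + q ^ 2))).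
  - pose proof (pow2_gt_0 (A - B)); apply Rmult_lt_0_compat; lra.
  - repeat apply Rmult_lt_0_compat; try apply pow_lt; lra.
  - refine (Rle_trans _ _ _ (Req_le _ _ _) H); field; lra.
Qed.

Lemma stereo_inv_separated_one A B q : A <> B ->
  geo_form (stereo_inv A) (stereo_inv B) (RtoC 1)
    * geo_form (stereo_inv A) (stereo_inv B) (stereo_inv q) <= 0 ->
  (q - A) * (q - B) <= 0.
Proof.
  intros HAB H; rewrite geo_form_stereo_inv_one, geo_form_stereo_inv3 in H.
  pose proof (one_plus_sqr_pos A); pose proof (one_plus_sqr_pos B); pose proof (one_plus_sqr_pos q).
  apply (nonpos_of_scaled (64 * (A - B) ^ 2) ((1 + A ^ 2) ^ 2 * (1 + B ^ 2) ^ 2 * (1 + q ^ 2))).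
  - pose proof (pow2_gt_0 (A - B)); apply Rmult_lt_0_compat; lra.
  - repeat apply Rmult_lt_0_compat; try apply pow_lt; lra.
  - refine (Rle_trans _ _ _ (Req_le _ _ _) H); field; lra.
Qed.

Definition same_endpoints (a b c d : C) : Prop := (a = c /\ b = d) \/ (a = d /\ b = c).

Lemma same_endpoints_geod a b c d z : same_endpoints a b c d -> geod a b z <-> geod c d z.
Proof. intros [[-> ->] | [-> ->]]; [tauto | split; apply geod_swap]. Qed.

Lemma same_endpoints_geo_form_mul a b c d z z' : same_endpoints a b c d ->
  geo_form a b z * geo_form a b z' = geo_form c d z * geo_form c d z'.
Proof. intros [[-> ->] | [-> ->]]; rewrite ?(geo_form_swap d c); ring. Qed.

Lemma vertex_succ_neq (a b v : nat -> C) :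
  (forall n, is_endpoint (a n) (b n) (v n) /\ is_endpoint (a (S n)) (b (S n)) (v n)) ->
  (forall i j k p, (i < j)%nat -> (j < k)%nat ->
     ~ (is_endpoint (a i) (b i) p /\ is_endpoint (a j) (b j) p /\ is_endpoint (a k) (b k) p)) ->
  forall n, v n <> v (S n).
Proof.
  intros Hvert Hthree n E; apply (Hthree n (S n) (S (S n)) (v n)); try lia.
  split; [apply Hvert |]; split; [apply Hvert | rewrite E; apply Hvert].
Qed.

Definition endpoint_seq (u : C) (v : nat -> C) (n : nat) : C :=
  match n with O => u | S k => v k end.

Lemma endpoint_seq_spec (a b v : nat -> C) :
  (forall n, is_endpoint (a n) (b n) (v n) /\ is_endpoint (a (S n)) (b (S n)) (v n)) ->
  (forall n, v n <> v (S n)) ->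
  exists w, (forall n, same_endpoints (a n) (b n) (w n) (w (S n))) /\ (forall n, v n = w (S n)).
Proof.
  intros Hvert Hne.
  destruct (proj1 (Hvert 0%nat)) as [Ha0 | Hb0];
    [exists (endpoint_seq (b 0%nat) v) | exists (endpoint_seq (a 0%nat) v)];
    (split; [| reflexivity]); intros [| m]; unfold same_endpoints; simpl; auto;
    specialize (Hne m); destruct (proj2 (Hvert m)) as [h1 | h1], (proj1 (Hvert (S m))) as [h2 | h2];
    (left + right); split; congruence.
Qed.

Section EndpointSeq.

Variables (a b w : nat -> C).
Hypothesis Hw : forall n, same_endpoints (a n) (b n) (w n) (w (S n)).

Lemma endpoint_seq_left n : is_endpoint (a n) (b n) (w n).
Proof. unfold is_endpoint; destruct (Hw n) as [[-> _] | [_ ->]]; auto. Qed.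

Lemma endpoint_seq_right n : is_endpoint (a n) (b n) (w (S n)).
Proof. unfold is_endpoint; destruct (Hw n) as [[_ ->] | [-> _]]; auto. Qed.

Lemma endpoint_seq_norm2 : (forall n, on_circle (a n) /\ on_circle (b n)) ->
  forall n, norm2 (w n) = 1.
Proof.
  intros Hcirc n; apply on_circle_norm2.
  destruct (endpoint_seq_left n) as [-> | ->]; apply Hcirc.
Qed.

Lemma endpoint_seq_adj_neq : (forall n, a n <> b n) -> forall n, w n <> w (S n).
Proof. intros Hdist n E; apply (Hdist n); destruct (Hw n) as [[-> ->] | [-> ->]]; auto. Qed.

Lemma endpoint_seq_far_neq :
  (forall i j k p, (i < j)%nat -> (j < k)%nat ->
     ~ (is_endpoint (a i) (b i) p /\ is_endpoint (a j) (b j) p /\ is_endpoint (a k) (b k) p)) ->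
  forall i j, (i < j)%nat -> w i <> w (S j).
Proof.
  intros Hthree i j Hij E; apply (Hthree i j (S j) (w i) Hij (Nat.lt_succ_diag_r j)).
  rewrite E at 2 3; split; [apply endpoint_seq_left |]; split;
    [apply endpoint_seq_right | apply endpoint_seq_left].
Qed.

End EndpointSeq.

Definition nested_at (a b : nat -> C) (n : nat) : Prop :=
  ((forall z, geod (a (n - 1)%nat) (b (n - 1)%nat) z -> side_pos (a n) (b n) z) /\
   (forall z, geod (a (n + 1)%nat) (b (n + 1)%nat) z -> side_neg (a n) (b n) z)) \/
  ((forall z, geod (a (n - 1)%nat) (b (n - 1)%nat) z -> side_neg (a n) (b n) z) /\
   (forall z, geod (a (n + 1)%nat) (b (n + 1)%nat) z -> side_pos (a n) (b n) z)).

Definition between (x p q : R) : Prop := (x - p) * (x - q) < 0.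

Lemma between_outer x p q : between x p q -> 0 < (p - q) * (p - x).
Proof.
  unfold between; intro H.
  replace ((p - q) * (p - x)) with ((x - p) ^ 2 - (x - p) * (x - q)) by ring.
  pose proof (pow2_ge_0 (x - p)); lra.
Qed.

Lemma between_of_nonpos x p q : (x - p) * (x - q) <= 0 -> x <> p -> x <> q -> between x p q.
Proof.
  unfold between; intros H Hp Hq.
  assert ((x - p) * (x - q) <> 0) by (apply Rmult_integral_contrapositive; split; lra); lra.
Qed.

Definition gap (y : nat -> R) (k : nat) : R := Rabs (y (S k) - y k).

Lemma bounded_below_or_arbitrarily_small (g : nat -> R) :
  (exists d, 0 < d /\ forall k, d <= g k) \/ (forall d, d > 0 -> exists k, g k < d).
Proof.
  destruct (classic (forall d, d > 0 -> exists k, g k < d)) as [H | H]; [now right | left].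
  apply not_all_ex_not in H as [d Hd]; apply imply_to_and in Hd as [Hd Hnot].
  exists d; split; [lra | intro k; apply Rnot_lt_le; intro Hk; apply Hnot; eauto].
Qed.

Section Interlaced.

Variable y : nat -> R.
Hypothesis Hb : forall k, between (y (S (S k))) (y k) (y (S k)).

Lemma interlaced_gap_step k : gap y (S k) + Rabs (y (S (S k)) - y k) = gap y k.
Proof.
  specialize (Hb k); unfold between, gap in *.
  destruct (Rle_dec (y k) (y (S k))).
  - assert (y k < y (S (S k)) < y (S k)) by (split; nra).
    rewrite (Rabs_left (y (S (S k)) - y (S k))), (Rabs_pos_eq (y (S (S k)) - y k)),
      (Rabs_pos_eq (y (S k) - y k)) by lra; ring.
  - assert (y (S k) < y (S (S k)) < y k) by (split; nra).
    rewrite (Rabs_pos_eq (y (S (S k)) - y (S k))), (Rabs_left (y (S (S k)) - y k)),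
      (Rabs_left (y (S k) - y k)) by lra; ring.
Qed.

Lemma interlaced_skip_sum N :
  sum_n (fun k => Rabs (y (S (S k)) - y k)) N = gap y 0 - gap y (S N).
Proof.
  induction N as [| N IH].
  - rewrite sum_O; pose proof (interlaced_gap_step 0); lra.
  - rewrite sum_n_succ, IH; pose proof (interlaced_gap_step (S N)); lra.
Qed.

Lemma interlaced_within k m : (k <= m)%nat -> Rabs (y m - y k) <= gap y k.
Proof.
  assert (Hin : forall i, Rmin (y k) (y (S k)) <= y (k + i)%nat <= Rmax (y k) (y (S k)) /\
                          Rmin (y k) (y (S k)) <= y (k + S i)%nat <= Rmax (y k) (y (S k))).
  { induction i as [| i [IH1 IH2]].
    - rewrite Nat.add_0_r, Nat.add_1_r.
      split; split; [apply Rmin_l | apply Rmax_l | apply Rmin_r | apply Rmax_r].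
    - split; [exact IH2 |]; specialize (Hb (k + i)%nat); unfold between in Hb.
      replace (S (S (k + i))) with (k + S (S i))%nat in Hb by lia.
      replace (S (k + i)) with (k + S i)%nat in Hb by lia.
      unfold Rmin, Rmax in *; destruct (Rle_dec (y k) (y (S k))); split; nra. }
  intro Hkm; replace m with (k + (m - k))%nat by lia.
  destruct (Hin (m - k)%nat) as [B _]; unfold gap, Rmin, Rmax in *.
  destruct (Rle_dec (y k) (y (S k))); apply Rabs_le.
  - rewrite Rabs_pos_eq by lra; lra.
  - rewrite Rabs_left by lra; lra.
Qed.

Lemma interlaced_bounded m : Rabs (y m) <= Rabs (y 0%nat) + gap y 0.
Proof.
  pose proof (interlaced_within 0 m (Nat.le_0_l m)).
  replace (y m) with (y 0%nat + (y m - y 0%nat)) by ring.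
  eapply Rle_trans; [apply Rabs_triang | lra].
Qed.

Lemma interlaced_cv : (forall d, d > 0 -> exists k, gap y k < d) -> exists xi, Un_cv y xi.
Proof.
  intro Hgap; cut (Cauchy_crit y).
  { intro Hc; destruct (Rcomplete.R_complete y Hc) as [xi H]; eauto. }
  intros eps Heps.
  destruct (Hgap (eps / 2)) as [k Hk]; [lra |]; exists k; intros n m Hn Hm; unfold R_dist.
  pose proof (interlaced_within k n Hn); pose proof (interlaced_within k m Hm).
  replace (y n - y m) with ((y n - y k) - (y m - y k)) by ring.
  eapply Rle_lt_trans; [apply Rabs_triang |]; rewrite Rabs_Ropp; lra.
Qed.

End Interlaced.

Lemma two_step_lower_bound (t f : nat -> R) :
  (forall n, 0 < t n) -> (forall n, 0 <= f n) ->
  (forall n, t n * exp (- f (S n)) <= t (S (S n))) ->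
  forall n, Rmin (t 0%nat) (t 1%nat) * exp (- sum_n f n) <= t n.
Proof.
  intros Ht Hf Hstep; set (m := Rmin (t 0%nat) (t 1%nat)).
  assert (Hm : 0 < m) by (apply Rmin_glb_lt; apply Ht).
  assert (Hmono : forall x y, x <= y -> m * exp (- y) <= m * exp (- x))
    by (intros x y Hxy; apply Rmult_le_compat_l; [lra | apply exp_le_compat; lra]).
  assert (Hexp1 : forall x, 0 <= x -> m * exp (- x) <= m)
    by (intros x Hx; rewrite <- (Rmult_1_r m) at 2; rewrite <- exp_0, <- Ropp_0; apply Hmono, Hx).
  cut (forall n, m * exp (- sum_n f n) <= t n /\ m * exp (- sum_n f (S n)) <= t (S n)).
  { intros H n; apply H. }
  assert (Hsum : forall n, 0 <= sum_n f n)
    by (intro n; rewrite sum_n_Reals; apply cond_pos_sum, Hf).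
  induction n as [| n [IH1 IH2]].
  - split; (apply Rle_trans with m; [apply Hexp1, Hsum |]); [apply Rmin_l | apply Rmin_r].
  - split; [exact IH2 |].
    eapply Rle_trans; [apply (Hmono (sum_n f (S n))) | eapply Rle_trans; [| apply Hstep]].
    + rewrite (sum_n_succ f (S n)); pose proof (Hf (S (S n))); lra.
    + rewrite sum_n_succ, Ropp_plus_distr, exp_plus, <- Rmult_assoc.
      apply Rmult_le_compat_r; [apply Rlt_le, exp_pos | exact IH1].
Qed.

Lemma ratio_step_lower_bound t0 t2 s1 s2 e ds :
  0 < ds <= s1 -> 0 < s2 -> 0 <= e -> 0 <= t0 ->
  s2 <= s1 + e -> t2 * s2 ^ 2 = t0 * s1 ^ 2 -> t0 * exp (- (2 * e / ds)) <= t2.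
Proof.
  intros Hds Hs2 He Ht0 Hs Ht.
  assert (Hratio : s2 <= s1 * exp (e / ds)).
  { pose proof (exp_ineq1_le (e / ds)).
    assert (0 <= e / ds) by (unfold Rdiv; apply Rmult_le_pos;
        [lra | apply Rlt_le, Rinv_0_lt_compat; lra]).
    assert (ds * (e / ds) = e) by (field; lra).
    nra. }
  set (E := exp (e / ds)) in Hratio; assert (HE : 0 < E) by apply exp_pos.
  replace (exp (- (2 * e / ds))) with (/ (E * E))
    by (unfold E; rewrite <- exp_plus, <- exp_Ropp; f_equal; field; lra).
  assert (Hsq : s2 ^ 2 <= s1 ^ 2 * (E * E))
    by (apply Rle_trans with ((s1 * E) ^ 2); [apply pow_incr | right; ring]; lra).
  apply (Rmult_le_reg_r (s2 ^ 2 * (E * E))).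
  { apply Rmult_lt_0_compat; [apply pow_lt | apply Rmult_lt_0_compat]; lra. }
  replace (t0 * / (E * E) * (s2 ^ 2 * (E * E))) with (t0 * s2 ^ 2) by (field; lra).
  replace (t2 * (s2 ^ 2 * (E * E))) with (t0 * s1 ^ 2 * (E * E)) by (rewrite <- Ht; ring).
  rewrite Rmult_assoc; apply Rmult_le_compat_l; lra.
Qed.

(** * Nested geodesics *)

Section Chain.

Variables (a b w : nat -> C).
Hypothesis Hw : forall n, same_endpoints (a n) (b n) (w n) (w (S n)).
Hypothesis Hcirc : forall n, norm2 (w n) = 1.
Hypothesis Hadj : forall n, w n <> w (S n).
Hypothesis Hfar : forall i j, (i < j)%nat -> w i <> w (S j).

Let y (k : nat) : R := coord (w 0%nat) (w (S k)).

Lemma chain_succ_neq i j : (i < j)%nat -> w (S i) <> w (S j).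
Proof.
  intro Hij; destruct (Nat.eq_dec j (S i)) as [-> | Hj]; [apply Hadj |].
  apply Hfar; lia.
Qed.

Lemma chain_stereo_inv k : stereo_inv (y k) = rot (w (S k)) (w 0%nat).
Proof.
  apply stereo_inv_coord; auto; intro E.
  destruct k as [| k]; [apply (Hadj 0%nat) | apply (Hfar 0%nat (S k)); [lia |]]; auto.
Qed.

Lemma chain_dist2 i j : dist2 (w (S i)) (w (S j)) = dist2 (stereo_inv (y i)) (stereo_inv (y j)).
Proof. rewrite !chain_stereo_inv, rot_dist2, Hcirc; ring. Qed.

Lemma chain_coord_neq i j : (i < j)%nat -> y i <> y j.
Proof.
  intros Hij E; apply (rot_neq _ _ _ (Hcirc 0%nat) (chain_succ_neq i j Hij)).
  rewrite <- !chain_stereo_inv, E; reflexivity.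
Qed.

Lemma chain_geod n z : geod (a n) (b n) z -> norm2 z < 1 /\ geo_form (w n) (w (S n)) z = 0.
Proof. intro Hz; apply geod_geo_form, (same_endpoints_geod _ _ _ _ z (Hw n)), Hz. Qed.

Lemma chain_ab_norm2 n : norm2 (a n) = 1 /\ norm2 (b n) = 1.
Proof. destruct (Hw n) as [[-> ->] | [-> ->]]; auto. Qed.

Lemma chain_ab_neq n : a n <> b n.
Proof. destruct (Hw n) as [[-> ->] | [-> ->]]; auto using not_eq_sym. Qed.

Lemma chain_far_endpoints_separated : (forall n, (1 <= n)%nat -> nested_at a b n) ->
  forall m, geo_form (w (S m)) (w (S (S m))) (w m)
            * geo_form (w (S m)) (w (S (S m))) (w (S (S (S m)))) <= 0.
Proof.
  intros Hnest m; rewrite <- (same_endpoints_geo_form_mul _ _ _ _ _ _ (Hw (S m))).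
  specialize (Hnest (S m) (le_n_S _ _ (Nat.le_0_l m))); unfold nested_at in Hnest.
  replace (S m - 1)%nat with m in Hnest by lia.
  replace (S m + 1)%nat with (S (S m)) in Hnest by lia.
  destruct (chain_ab_norm2 m), (chain_ab_norm2 (S (S m))).
  apply (opposite_sides_endpoints _ _ (a m) (b m) (a (S (S m))) (b (S (S m))));
      auto using chain_ab_neq.
  - apply (endpoint_seq_left a b w Hw).
  - apply (endpoint_seq_right a b w Hw).
Qed.

Lemma chain_geo_form i j l :
  geo_form (w (S i)) (w (S j)) (w (S l))
      = geo_form (stereo_inv (y i)) (stereo_inv (y j)) (stereo_inv (y l)).
Proof. rewrite !chain_stereo_inv, rot_geo_form; auto. Qed.

Lemma chain_geo_form_zero i j :
  geo_form (w (S i)) (w (S j)) (w 0%nat) = geo_form (stereo_inv (y i)) (stereo_inv (y j)) (RtoC 1).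
Proof. rewrite !chain_stereo_inv, <- (rot_self _ (Hcirc 0%nat)), rot_geo_form; auto. Qed.

Lemma chain_interlaced : (forall n, (1 <= n)%nat -> nested_at a b n) ->
  forall k, between (y (S (S k))) (y k) (y (S k)).
Proof.
  intros Hnest; pose proof (chain_far_endpoints_separated Hnest) as Hsep.
  induction k as [| k IH].
  - pose proof (Hsep 0%nat) as H; rewrite chain_geo_form_zero, chain_geo_form in H.
    apply stereo_inv_separated_one in H; [| apply chain_coord_neq; lia].
    apply between_of_nonpos; [exact H | |]; apply not_eq_sym, chain_coord_neq; lia.
  - pose proof (Hsep (S k)) as H; rewrite !chain_geo_form in H.
    apply stereo_inv_separated in H; [| apply chain_coord_neq; lia].
    pose proof (between_outer _ _ _ IH).
    apply between_of_nonpos; [nra | |]; apply not_eq_sym, chain_coord_neq; lia.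
Qed.

Lemma chain_converges_of_endpoints_cv zeta : norm2 zeta = 1 ->
  (forall d, d > 0 -> exists N, forall n, (N <= n)%nat -> dist2 (w n) zeta < d) ->
  converges_to_ideal_point a b.
Proof.
  intros Hzeta Hcv; exists zeta; split.
  { unfold on_circle, Cmod; change (sqrt (norm2 zeta) = 1); rewrite Hzeta; apply sqrt_1. }
  intros eps Heps; set (e := eps / 2); assert (He : 0 < e) by (unfold e; lra).
  set (d := Rmin (e ^ 2) (e ^ 4)).
  assert (Hd : 0 < d) by (apply Rmin_glb_lt; apply pow_lt; lra).
  destruct (Hcv d Hd) as [N HN]; exists N; intros n Hn z Hz.
  destruct (chain_geod n z Hz) as [Hz' G].
  pose proof (HN n Hn) as Hn0; pose proof (HN (S n) (le_S _ _ Hn)) as Hn1.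
  pose proof (geod_dist2_mul_le _ _ z (Hcirc n) (Hcirc (S n)) (not_eq_sym (Hadj n)) Hz' G) as Hprod.
  pose proof (dist2_le_twice_sum (w n) zeta (w (S n))) as Hchord.
  rewrite (dist2_sym zeta) in Hchord.
  assert (Hd4 : d <= e ^ 4) by apply Rmin_r; assert (Hd2 : d <= e ^ 2) by apply Rmin_l.
  assert (Hnear : forall u, dist2 z u < e ^ 2 -> dist2 u zeta < e ^ 2 ->
                            Cmod (Cminus z zeta) < eps).
  { intros u Hzu Huz; rewrite Cmod_minus_dist2.
    eapply Rle_lt_trans; [apply (sqrt_dist2_triangle z u) |].
    pose proof (sqrt_lt_of_lt_sqr _ _ (dist2_ge0 z u) He Hzu).
    pose proof (sqrt_lt_of_lt_sqr _ _ (dist2_ge0 u zeta) He Huz); unfold e in *; lra. }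
  destruct (Rlt_dec (dist2 z (w n)) (e ^ 2)) as [Hc1 | Hc1]; [apply (Hnear (w n)); lra |].
  apply (Hnear (w (S n))); [| lra].
  apply Rnot_le_lt; intro Hc2; pose proof (dist2_ge0 z (w (S n))).
  assert (Hsq : e ^ 2 * e ^ 2 <= dist2 z (w n) * dist2 z (w (S n))) by (apply Rmult_le_compat; nra).
  replace (e ^ 2 * e ^ 2) with (e ^ 4) in Hsq by ring; lra.
Qed.

Lemma chain_converges_of_gap_vanishing : (forall n, (1 <= n)%nat -> nested_at a b n) ->
  (forall d, d > 0 -> exists k, gap y k < d) -> converges_to_ideal_point a b.
Proof.
  intros Hnest Hgap; destruct (interlaced_cv y (chain_interlaced Hnest) Hgap) as [xi Hxi].
  apply (chain_converges_of_endpoints_cv (Cmult (w 0%nat) (stereo_inv xi))).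
  { rewrite norm2_mult, Hcirc, stereo_inv_norm2; ring. }
  intros d Hd; assert (Hd2 : sqrt d / 2 > 0) by (pose proof (sqrt_lt_R0 d Hd); lra).
  destruct (Hxi (sqrt d / 2) Hd2) as [N HN].
  exists (S N); intros [| n] Hn; [lia |].
  replace (dist2 (w (S n)) (Cmult (w 0%nat) (stereo_inv xi)))
    with (dist2 (stereo_inv (y n)) (stereo_inv xi))
    by (rewrite chain_stereo_inv, <- (rot_mult (w 0%nat) (stereo_inv xi) (Hcirc 0%nat)) at 1;
        rewrite rot_dist2, Hcirc; ring).
  eapply Rle_lt_trans; [apply stereo_inv_dist2_le |].
  specialize (HN n ltac:(lia)); unfold R_dist in HN.
  rewrite <- (pow2_abs (y n - xi)), <- (pow2_sqrt d) by lra.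
  pose proof (Rabs_pos (y n - xi)); nra.
Qed.

Section HoroPath.

Variables (P : nat -> C) (L : nat -> R).
Hypothesis HP : forall n, geod (a n) (b n) (P n).
Hypothesis HL : forall n, horo_arc_length (w (S n)) (P n) (P (S n)) (L n).

Let t (n : nat) : R := horo_height (w (S n)) (P n).
Let s (n : nat) : R := sqrt (dist2 (w n) (w (S n))).
Let e (n : nat) : R := sqrt (dist2 (w (S (S n))) (w n)).

Lemma horo_path_arc n : norm2 (P (S n)) < 1 /\ horo_height (w (S n)) (P (S n)) = t n /\
  L n * t n = Rabs (horo_abscissa (w (S n)) (P (S n)) - horo_abscissa (w (S n)) (P n)).
Proof. apply horo_arc_coords; [apply Hcirc | apply (chain_geod n), HP | apply HL]. Qed.

Lemma horo_path_height_pos n : 0 < t n.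
Proof.
  destruct (chain_geod n (P n) (HP n)) as [Hz _]; unfold t, horo_height.
  apply Rdiv_lt_0_compat; [lra | apply dist2_disk_circle_pos; auto].
Qed.

Lemma horo_path_chord_pos n : 0 < s n.
Proof. apply sqrt_lt_R0, dist2_pos, Hadj. Qed.

Lemma horo_path_length_nonneg n : 0 <= L n.
Proof.
  destruct (horo_path_arc n) as (_ & _ & HLt); pose proof (horo_path_height_pos n).
  pose proof (Rabs_pos (horo_abscissa (w (S n)) (P (S n)) - horo_abscissa (w (S n)) (P n))); nra.
Qed.

Lemma horo_path_height_recurrence n : t n * t (S n) * s (S n) ^ 2 = 4.
Proof.
  destruct (chain_geod (S n) (P (S n)) (HP (S n))) as [Hz G].
  destruct (horo_path_arc n) as (_ & Ht & _).
  unfold s; rewrite pow2_sqrt by apply dist2_ge0; rewrite <- Ht.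
  apply horo_height_mul_geod; auto; apply not_eq_sym, Hadj.
Qed.

Lemma horo_path_length n : L n * t n * s n * s (S n) = 2 * e n.
Proof.
  destruct (chain_geod (S n) (P (S n)) (HP (S n))) as [Hz1 G1].
  destruct (chain_geod n (P n) (HP n)) as [Hz0 G0'].
  assert (G0 : geo_form (w (S n)) (w n) (P n) = 0) by (rewrite geo_form_swap, G0'; ring).
  destruct (horo_path_arc n) as (_ & _ & HLt).
  rewrite (horo_abscissa_geod _ _ _ (Hcirc _) (Hcirc _) (not_eq_sym (Hadj _)) Hz1 G1),
    (horo_abscissa_geod _ _ _ (Hcirc _) (Hcirc _) (Hadj _) Hz0 G0) in HLt.
  pose proof (coord_diff_sqr _ _ _ (Hcirc (S n)) (Hcirc (S (S n))) (Hcirc n)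
                (not_eq_sym (Hadj _)) (Hadj n)) as D.
  rewrite <- (pow2_abs (coord _ _ - coord _ _)), <- HLt in D.
  pose proof (horo_path_height_pos n); pose proof (horo_path_chord_pos n).
  pose proof (horo_path_chord_pos (S n)); pose proof (horo_path_length_nonneg n).
  apply Rsqr_inj; [apply Rmult_le_pos; [apply Rmult_le_pos; [apply Rmult_le_pos |] |]; lra
                  | apply Rmult_le_pos; [lra | apply sqrt_pos] |].
  unfold Rsqr, s, e.
  transitivity ((L n * t n) ^ 2 * (sqrt (dist2 (w n) (w (S n))) * sqrt (dist2 (w n) (w (S n))))
                * (sqrt (dist2 (w (S n)) (w (S (S n)))) * sqrt (dist2 (w (S n)) (w (S (S n))))));
    [ring |].
  transitivity (4 * (sqrt (dist2 (w (S (S n))) (w n)) * sqrt (dist2 (w (S (S n))) (w n))));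
    [| ring].
  rewrite !sqrt_sqrt, (dist2_sym (w (S n))) by apply dist2_ge0; rewrite <- D; ring.
Qed.

Lemma horo_path_chord_step n : s (S (S n)) <= s (S n) + e (S n).
Proof.
  unfold s, e; rewrite (dist2_sym (w (S (S (S n))))).
  rewrite <- (dist2_sym (w (S (S n))) (w (S n))); apply sqrt_dist2_triangle.
Qed.

Hypothesis Hinter : forall k, between (y (S (S k))) (y k) (y (S k)).

Lemma horo_path_outer_chords_bounded N : sum_n e N <= 2 + 2 * gap y 0.
Proof.
  assert (He0 : e 0%nat <= 2).
  { unfold e; rewrite <- (sqrt_pow2 2) by lra; apply sqrt_le_1_alt.
    pose proof (dist2_circle_le4 _ _ (Hcirc 2) (Hcirc 0)); lra. }
  assert (HeS : forall k, e (S k) <= 2 * Rabs (y (S (S k)) - y k)).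
  { intro k; unfold e; rewrite chain_dist2, <- (sqrt_pow2 (2 * Rabs _))
      by (pose proof (Rabs_pos (y (S (S k)) - y k)); lra).
    apply sqrt_le_1_alt; eapply Rle_trans; [apply stereo_inv_dist2_le |].
    rewrite Rpow_mult_distr, pow2_abs; lra. }
  pose proof (Rabs_pos (y 1%nat - y 0%nat)); unfold gap in *.
  destruct N as [| N]; [rewrite sum_O; lra |].
  rewrite sum_n_shift; apply Rplus_le_compat; [exact He0 |].
  eapply Rle_trans; [apply (sum_n_le_compat _ _ HeS) |].
  rewrite sum_n_Rmult_l, interlaced_skip_sum by exact Hinter.
  pose proof (Rabs_pos (y (S (S N)) - y (S N))); unfold gap; lra.
Qed.

Variable delta : R.
Hypothesis Hdelta : 0 < delta.
Hypothesis Hgap : forall k, delta <= gap y k.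

Lemma horo_path_chord_lower : exists ds, 0 < ds /\ forall n, ds <= s n.
Proof.
  set (M := Rabs (y 0%nat) + gap y 0); pose proof (one_plus_sqr_pos M).
  assert (Hd : 0 < 2 * delta / (1 + M ^ 2)) by (apply Rdiv_lt_0_compat; lra).
  exists (Rmin (s 0%nat) (2 * delta / (1 + M ^ 2))); split.
  { apply Rmin_glb_lt; [apply horo_path_chord_pos | exact Hd]. }
  intros [| k]; [apply Rmin_l |]; eapply Rle_trans; [apply Rmin_r |].
  unfold s; rewrite chain_dist2, <- (sqrt_pow2 (2 * delta / (1 + M ^ 2))) by lra.
  apply sqrt_le_1_alt; eapply Rle_trans;
    [| apply (stereo_inv_dist2_ge _ _ M); apply interlaced_bounded; exact Hinter].
  replace ((2 * delta / (1 + M ^ 2)) ^ 2) with (4 * delta ^ 2 / (1 + M ^ 2) ^ 2) by (field; lra).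
  apply Rmult_le_compat_r; [apply Rlt_le, Rinv_0_lt_compat, pow_lt; lra |].
  specialize (Hgap k); unfold gap in Hgap.
  rewrite <- (pow2_abs (y k - y (S k))), <- Rabs_Ropp, Ropp_minus_distr; nra.
Qed.

Lemma horo_path_height_lower : exists tm, 0 < tm /\ forall n, tm <= t n.
Proof.
  destruct horo_path_chord_lower as (ds & Hds & Hs).
  assert (He : forall n, 0 <= 2 / ds * e n)
    by (intro n; apply Rmult_le_pos; [apply Rlt_le, Rdiv_lt_0_compat | apply sqrt_pos]; lra).
  assert (Hstep : forall n, t n * exp (- (2 / ds * e (S n))) <= t (S (S n))).
  { intro n; replace (2 / ds * e (S n)) with (2 * e (S n) / ds) by (field; lra).
    pose proof (horo_path_height_recurrence n); pose proof (horo_path_height_recurrence (S n)).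
    pose proof (horo_path_height_pos (S n)).
    apply (ratio_step_lower_bound _ _ (s (S n)) (s (S (S n)))).
    - split; [exact Hds | apply Hs].
    - apply horo_path_chord_pos.
    - apply sqrt_pos.
    - apply Rlt_le, horo_path_height_pos.
    - apply horo_path_chord_step.
    - apply (Rmult_eq_reg_l (t (S n))); lra. }
  pose proof (two_step_lower_bound t _ horo_path_height_pos He Hstep) as Hlow.
  exists (Rmin (t 0%nat) (t 1%nat) * exp (- (2 / ds * (2 + 2 * gap y 0)))); split.
  { apply Rmult_lt_0_compat; [apply Rmin_glb_lt; apply horo_path_height_pos | apply exp_pos]. }
  intro n; eapply Rle_trans; [| apply Hlow].
  apply Rmult_le_compat_l; [apply Rlt_le, Rmin_glb_lt; apply horo_path_height_pos |].
  apply exp_le_compat; rewrite sum_n_Rmult_l.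
  pose proof (horo_path_outer_chords_bounded n).
  assert (0 < 2 / ds) by (apply Rdiv_lt_0_compat; lra).
  nra.
Qed.

Lemma horo_path_length_bounded : exists B, forall N, sum_n L N <= B.
Proof.
  destruct horo_path_chord_lower as (ds & Hds & Hs), horo_path_height_lower as (tm & Htm & Ht).
  set (K := 2 / (tm * ds ^ 2)).
  assert (HK : 0 < K)
    by (apply Rdiv_lt_0_compat; [| apply Rmult_lt_0_compat; [| apply pow_lt]]; lra).
  assert (HLe : forall n, L n <= K * e n).
  { intro n; pose proof (horo_path_length n); pose proof (horo_path_length_nonneg n).
    specialize (Hs n) as Hs0; specialize (Hs (S n)) as Hs1; specialize (Ht n).
    apply (Rmult_le_reg_r (tm * ds ^ 2)); [apply Rmult_lt_0_compat; [| apply pow_lt]; lra |].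
    replace (K * e n * (tm * ds ^ 2)) with (2 * e n) by (unfold K; field; lra).
    assert (tm * ds ^ 2 <= t n * s n * s (S n)).
    { replace (tm * ds ^ 2) with (tm * ds * ds) by ring.
      apply Rmult_le_compat; [apply Rmult_le_pos | | apply Rmult_le_compat |]; lra. }
    nra. }
  exists (K * (2 + 2 * gap y 0)); intro N.
  eapply Rle_trans; [apply (sum_n_le_compat _ _ HLe) |]; rewrite sum_n_Rmult_l.
  apply Rmult_le_compat_l; [lra | apply horo_path_outer_chords_bounded].
Qed.

End HoroPath.

End Chain.

Theorem propositionA1
  (a b : nat -> C) (v : nat -> C) (P : nat -> C) (L : nat -> R)
  (* geodesics in D: distinct ideal endpoints on S^1 *)
  (Hcirc : forall n, on_circle (a n) /\ on_circle (b n))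
  (Hdist : forall n, a n <> b n)
  (* nested *)
  (Hnest : forall n, (1 <= n)%nat ->
     ((forall z, geod (a (n - 1)%nat) (b (n - 1)%nat) z -> side_pos (a n) (b n) z) /\
      (forall z, geod (a (n + 1)%nat) (b (n + 1)%nat) z -> side_neg (a n) (b n) z)) \/
     ((forall z, geod (a (n - 1)%nat) (b (n - 1)%nat) z -> side_neg (a n) (b n) z) /\
      (forall z, geod (a (n + 1)%nat) (b (n + 1)%nat) z -> side_pos (a n) (b n) z)))
  (* adjacent geodesics share the ideal endpoint v n *)
  (Hvert : forall n, is_endpoint (a n) (b n) (v n) /\
                     is_endpoint (a (S n)) (b (S n)) (v n))
  (* no three of the geodesics share an ideal endpoint *)
  (Hthree : forall i j k p, (i < j)%nat -> (j < k)%nat ->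
     ~ (is_endpoint (a i) (b i) p /\ is_endpoint (a j) (b j) p /\
        is_endpoint (a k) (b k) p))
  (* the piecewise horocyclic path h *)
  (HP0 : geod (a 0%nat) (b 0%nat) (P 0%nat))
  (HPn : forall n, geod (a (S n)) (b (S n)) (P (S n)) /\
                   on_horocycle (v n) (P n) (P (S n)))
  (HL : forall n, horo_arc_length (v n) (P n) (P (S n)) (L n)) :
  converges_to_ideal_point a b <-> is_lim_seq (sum_n L) p_infty.
Proof.
  assert (HP : forall n, geod (a n) (b n) (P n)) by (intros [| n]; [exact HP0 | apply HPn]).
  destruct (endpoint_seq_spec a b v Hvert (vertex_succ_neq a b v Hvert Hthree)) as (w & Hw & Hvw).
  pose proof (endpoint_seq_norm2 a b w Hw Hcirc) as Hw1.
  pose proof (endpoint_seq_adj_neq a b w Hw Hdist) as Hadj.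
  pose proof (endpoint_seq_far_neq a b w Hw Hthree) as Hfar.
  assert (HLw : forall n, horo_arc_length (w (S n)) (P n) (P (S n)) (L n))
    by (intro n; rewrite <- Hvw; apply HL).
  split.
  - apply (horo_length_diverges_of_converges a b (fun n => w (S n)) P L); auto.
  - intro Hlim; pose proof (chain_interlaced a b w Hw Hw1 Hadj Hfar Hnest) as Hinter.
    destruct (bounded_below_or_arbitrarily_small (gap (fun k => coord (w 0%nat) (w (S k)))))
      as [(delta & Hdelta & Hgap) | Hvanish].
    + exfalso; apply (is_lim_seq_p_infty_unbounded _ Hlim).
      exact (horo_path_length_bounded a b w Hw Hw1 Hadj Hfar P L HP HLw Hinter delta Hdelta Hgap).
    + exact (chain_converges_of_gap_vanishing a b w Hw Hw1 Hadj Hfar Hnest Hvanish).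
Qed.
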